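(* Let $F$ be a minimally unsatisfiable clause-set and $(v,w)$ a singular tuple for $F$ with singularity-degree tuple $(1,1)$. Let $C,D\in F$ be the two clauses containing the variable $v$. 1. Assume $w$ is not 1-singular for $F$. Then $w$ is 2-singular for $F$; if $E_0\in F$ is its main clause and $E_1,E_2\in F$ its two side clauses, then $\{E_1,E_2\}=\{C,D\}$; $v$ is 1-singular for $\mathrm{DP}_w(F)$; and thus $(w,v)$ is a singular tuple for $F$ with singularity-degree tuple $(2,1)$. 2. Otherwise ($w$ is 1-singular for $F$): $v$ is 1-singular for $\mathrm{DP}_w(F)$; thus $(w,v)$ is a singular tuple for $F$ with singularity-degree tuple $(1,1)$; and if $E_1,E_2$ are the two clauses of $F$ containing the variable $w$, then $|\{C,D\}\cap\{E_1,E_2\}|\le1$.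
   Context: Literals are variables $v$ and complements $\overline{v}$; a clause is a finite set of literals with no complementary pair; a clause-set is a finite set of clauses; $\mathrm{ldeg}_F(x)$ is the number of clauses of $F$ containing literal $x$, $\mathrm{vdeg}_F(v)=\mathrm{ldeg}_F(v)+\mathrm{ldeg}_F(\overline{v})$. $\mathrm{DP}_v(F) := \{C \in F : v \notin \mathrm{var}(C)\} \cup \{(C \cup D)\setminus\{v,\overline{v}\} : C, D \in F,\ C \cap \overline{D} = \{v\}\}$; $\mathrm{DP}_{v,w}(F)=\mathrm{DP}_w(\mathrm{DP}_v(F))$. A variable $v$ is singular for $F$ if $\min(\mathrm{ldeg}_F(v),\mathrm{ldeg}_F(\overline{v}))=1$, $m$-singular if additionally $\mathrm{vdeg}_F(v)-1=m$; 1-singular means $\mathrm{ldeg}_F(v)=\mathrm{ldeg}_F(\overline{v})=1$. For a singular variable with singular literal $x$ (a literal of $v$ with $\mathrm{ldeg}_F(x)=1$), the main clause is the clause containing $x$ and the side clauses are those containing $\overline{x}$. For minimally unsatisfiable $F$, $(v,w)$ is a singular tuple if $v$ is singular for $F$ and $w$ is singular for $\mathrm{DP}_v(F)$; its singularity-degree tuple is $(m_1,m_2)$ where $v$ is $m_1$-singular for $F$ and $w$ is $m_2$-singular for $\mathrm{DP}_v(F)$. *)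

From HB Require Import structures.
From mathcomp Require Import all_boot all_order.
From mathcomp Require Import finmap.
Set Implicit Arguments. Unset Strict Implicit. Unset Printing Implicit Defensive.
Local Open Scope fset_scope.

(* Variables are natural numbers; a literal is a pair (variable, sign),
   sign = true for the positive literal v, false for the complement ~v. *)
Definition lit := (nat * bool)%type.
Definition lvar (x : lit) : nat := x.1.
Definition compl (x : lit) : lit := (x.1, ~~ x.2).
Definition pos (v : nat) : lit := (v, true).
Definition neg (v : nat) : lit := (v, false).

Definition clause := {fset lit}.
Definition complset (C : clause) : clause := [fset compl x | x in C].
Definition is_clause (C : clause) : bool := [forall x : C, compl (val x) \notin C].
Definition is_clauseset (F : {fset clause}) : bool := [forall C : F, is_clause (val C)].

Definition var (C : clause) : {fset nat} := [fset lvar x | x in C].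

Definition satisfies (f : nat -> bool) (F : {fset clause}) : Prop :=
  forall C, C \in F -> exists2 x, x \in C & f (lvar x) = x.2.
Definition satisfiable (F : {fset clause}) : Prop := exists f, satisfies f F.

Definition MU (F : {fset clause}) : Prop :=
  is_clauseset F /\ ~ satisfiable F /\ forall C, C \in F -> satisfiable (F `\ C).

Definition ldeg (F : {fset clause}) (x : lit) : nat := #|` [fset C in F | x \in C] |.
Definition vdeg (F : {fset clause}) (v : nat) : nat := ldeg F (pos v) + ldeg F (neg v).

Definition DP (v : nat) (F : {fset clause}) : {fset clause} :=
  [fset C in F | v \notin var C] `|`
  [fset (C `|` D) `\` [fset pos v; neg v] | C in F, D in F &
        C `&` complset D == [fset pos v]].

Definition singular (F : {fset clause}) (v : nat) : bool :=
  minn (ldeg F (pos v)) (ldeg F (neg v)) == 1.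
Definition msingular (F : {fset clause}) (v : nat) (m : nat) : bool :=
  singular F v && (vdeg F v - 1 == m).

Definition side_clauses (F : {fset clause}) (x : lit) : {fset clause} :=
  [fset E in F | compl x \in E].

Definition singular_tuple (F : {fset clause}) (v w m1 m2 : nat) : bool :=
  msingular F v m1 && msingular (DP v F) w m2.

(* Write Cp and Cn for the clauses containing v and ~v. Since v is 1-singular, DP_v
   replaces them by their resolvent R, which is not in F: otherwise a model of F without
   Cp could be flipped at v into a model of F. Hence a literal z other than v keeps its
   degree under DP_v, unless it lies in both Cp and Cn, where its two occurrences merge
   into R. If w is 1-singular after DP_v but not before, some literal y of w therefore
   occurs exactly in Cp and Cn, so w is 2-singular with side clauses {Cp, Cn}.
   In both cases DP_w resolves the unique clause of each literal of v with the unique clause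
   of the complement of its w-literal, so v stays 1-singular. Finally, when w is
   1-singular, Cp and Cn cannot both contain w: they would clash in v and in w, whereas
   in a minimally unsatisfiable clause-set the main clause and the side clause of a
   singular literal clash only in that literal. *)

From mathcomp Require Import all_boot all_order.
From mathcomp Require Import finmap zify.
Set Implicit Arguments. Unset Strict Implicit. Unset Printing Implicit Defensive.
Local Open Scope fset_scope.

Lemma cardfsI2 (K : choiceType) (A : {fset K}) (a b : K) : a != b ->
  #|` A `&` [fset a; b]| = ((a \in A) + (b \in A))%N.
Proof.
move=> ab; rewrite -(cardfsID [fset a]) -fsetIA fsetI1 !inE eqxx /=.
have -> : A `&` [fset a; b] `\` [fset a] = A `&` [fset b].
  apply/fsetP => x; rewrite !inE; case: (eqVneq x a) => [->|] /=; last by rewrite andbC.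
  by rewrite (negbTE ab) andbF.
by rewrite !fsetI1; case: (a \in A); case: (b \in A); rewrite ?cardfs1 ?cardfs0.
Qed.

Lemma cardfsI2_le1 (K : choiceType) (A : {fset K}) (a b : K) :
  ~~ ((a \in A) && (b \in A)) -> #|` [fset a; b] `&` A| <= 1.
Proof.
move=> nab; rewrite fsetIC; have [<-|ab] := eqVneq a b.
  by rewrite fsetUid fsetI1; case: ifP; rewrite ?cardfs1 ?cardfs0.
by rewrite cardfsI2 //; move: nab; case: (a \in A); case: (b \in A).
Qed.

Lemma fset2_eq (K : choiceType) (x y a b : K) :
  x \in [fset a; b] -> y \in [fset a; b] -> x != y -> [fset x; y] = [fset a; b].
Proof.
rewrite !inE => /orP[]/eqP-> /orP[]/eqP->; rewrite ?eqxx // => _.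
by rewrite fsetUC.
Qed.

Lemma complK : involutive compl.
Proof. by case=> n b; rewrite /compl /= negbK. Qed.

Lemma lit_of_var (x : lit) (u : nat) : lvar x = u -> x = pos u \/ x = neg u.
Proof. by case: x => n [] /= ->; [left | right]. Qed.

Lemma same_var_lit (x y : lit) (u : nat) :
  lvar x = u -> lvar y = u -> x = y \/ x = compl y.
Proof. by case: x y => n b [m c] /= -> ->; rewrite /compl /=; case: b; case: c; auto. Qed.

Lemma in_complset (E : clause) (x : lit) : (x \in complset E) = (compl x \in E).
Proof.
apply/imfsetP/idP => [[y yE ->]|xE]; first by rewrite complK.
by exists (compl x); rewrite ?complK.
Qed.

Lemma varP (u : nat) (E : clause) :
  reflect (exists2 x, x \in E & lvar x = u) (u \in var E).
Proof.
apply: (iffP idP) => [/imfsetP[x xE ->]|[x xE <-]]; first by exists x.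
exact: in_imfset.
Qed.

Lemma var_lit (x : lit) (E : clause) : x \in E -> lvar x \in var E.
Proof. by move=> xE; apply/varP; exists x. Qed.

Lemma compl_notin (F : {fset clause}) (E : clause) (x : lit) :
  is_clauseset F -> E \in F -> x \in E -> compl x \notin E.
Proof. by move=> /forallP FF EF xE; have /forallP/(_ [` xE]) := FF [` EF]. Qed.

(* [ldeg F x] is [#|` occ F x|] and [side_clauses F x] is [occ F (compl x)] by conversion. *)
Definition occ (F : {fset clause}) (x : lit) : {fset clause} := [fset E in F | x \in E].

Lemma mem_occ (F : {fset clause}) (x : lit) (E : clause) :
  (E \in occ F x) = (E \in F) && (x \in E).
Proof. by rewrite !inE. Qed.

Section UniqueOccurrence.
Variables (F : {fset clause}) (x : lit) (R : clause).

Lemma occ1_mem : occ F x = [fset R] -> R \in F /\ x \in R.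
Proof. by move=> occR; apply/andP; rewrite -mem_occ occR inE. Qed.

Lemma occ1_uniq : occ F x = [fset R] -> forall E, E \in F -> x \in E -> E = R.
Proof. by move=> occR E EF xE; apply/eqP; rewrite -in_fset1 -occR mem_occ EF. Qed.

Lemma occ1_intro :
  R \in F -> x \in R -> (forall E, E \in F -> x \in E -> E = R) -> occ F x = [fset R].
Proof.
move=> RF xR uniqR; apply/fsetP => E; rewrite mem_occ inE.
by apply/andP/eqP => [[EF xE]|->]; first exact: uniqR.
Qed.

End UniqueOccurrence.

Lemma ldeg1P (F : {fset clause}) (x : lit) :
  reflect (exists R, occ F x = [fset R]) (ldeg F x == 1).
Proof. exact: cardfs1P. Qed.

Lemma msingular1P (F : {fset clause}) (u : nat) :
  reflect (ldeg F (pos u) = 1 /\ ldeg F (neg u) = 1) (msingular F u 1).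
Proof.
rewrite /msingular /singular /vdeg.
by apply: (iffP andP) => [[/eqP p /eqP n]|[-> ->]] //; lia.
Qed.

Lemma msingular2 (F : {fset clause}) (y : lit) :
  ldeg F y = 2 -> ldeg F (compl y) = 1 -> msingular F (lvar y) 2.
Proof. by case: y => u [] /= y2 cy1; rewrite /msingular /singular /vdeg y2 cy1. Qed.

(* A model of [F `\ P] falsifies [P]; flipping it to satisfy [y] would satisfy [F]
   unless [M], the only clause with [compl y], is falsified outside the variable of [y]. *)
Lemma MU_flip (F : {fset clause}) (P M : clause) (y : lit) :
  MU F -> P \in F -> y \in P -> occ F (compl y) = [fset M] ->
  exists f, [/\ satisfies f (F `\ P),
                forall t, t \in P -> f (lvar t) != t.2
              & forall t, t \in M -> lvar t != lvar y -> f (lvar t) != t.2].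
Proof.
move=> [_ [unsatF minF]] PF yP occM; have [f satf] := minF P PF.
have falsP t : t \in P -> f (lvar t) != t.2.
  move=> tP; apply/eqP => ft; apply: unsatF; exists f => E EF.
  have [->|EP] := eqVneq E P; first by exists t.
  by apply: satf; rewrite in_fsetD1 EP EF.
exists f; split=> // t tM ty; apply/eqP => ft; apply: unsatF.
exists (fun n => if n == lvar y then y.2 else f n) => E EF.
have [->|EP] := eqVneq E P; first by exists y; rewrite ?eqxx.
have /satf[z zE fz] : E \in F `\ P by rewrite in_fsetD1 EP EF.
have [/same_var_lit/(_ erefl)[zy|zcy]|zy] := eqVneq (lvar z) (lvar y).
- by exists y; rewrite -?zy ?eqxx.
- by exists t; rewrite ?(negbTE ty) // (occ1_uniq occM EF) // -zcy.
- by exists z; rewrite ?(negbTE zy).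
Qed.

Lemma MU_singular_clash (F : {fset clause}) (P M : clause) (y a : lit) :
  MU F -> P \in F -> y \in P -> occ F (compl y) = [fset M] ->
  a \in P -> compl a \in M -> a = y.
Proof.
move=> muF PF yP occM aP caM.
have [f [_ falsP falsM]] := MU_flip muF PF yP occM.
have [/same_var_lit/(_ erefl)[//|acy]|ay] := eqVneq (lvar a) (lvar y).
  by move: (compl_notin muF.1 PF yP); rewrite -acy aP.
by move: (falsP a aP) (falsM _ caM ay) => /=; case: (f _); case: (a.2).
Qed.

Definition resolvent (u : nat) (P Q : clause) : clause := (P `|` Q) `\` [fset pos u; neg u].

Lemma mem_resolvent (u : nat) (P Q : clause) (z : lit) :
  (z \in resolvent u P Q) = (lvar z != u) && ((z \in P) || (z \in Q)).
Proof.
rewrite !inE; congr (_ && _).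
by case: z => n [] /=; rewrite /pos /neg !xpair_eqE /= ?andbT ?andbF ?orbF.
Qed.

Lemma resolventC (u : nat) (P Q : clause) : resolvent u P Q = resolvent u Q P.
Proof. by rewrite /resolvent fsetUC. Qed.

Lemma DP_var (u : nat) (F : {fset clause}) (E : clause) : E \in DP u F -> u \notin var E.
Proof.
rewrite /DP in_fsetU !inE => /orP[/andP[_ ->] //|/imfset2P[P _ [Q _ ->]]].
apply/negP => /varP[z]; rewrite -/(resolvent u P Q) mem_resolvent => /andP[zu _] /eqP.
exact/negP.
Qed.

Lemma DP_keep (u : nat) (F : {fset clause}) (E : clause) :
  E \in F -> u \notin var E -> E \in DP u F.
Proof. by move=> EF uE; rewrite /DP in_fsetU !inE EF uE. Qed.

Lemma DP_resolvent (F : {fset clause}) (P Q : clause) (y : lit) :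
  P \in F -> Q \in F -> y \in P -> compl y \in Q ->
  (forall a, a \in P -> compl a \in Q -> a = y) ->
  resolvent (lvar y) P Q \in DP (lvar y) F.
Proof.
move=> PF QF yP cyQ clashPQ; rewrite /DP in_fsetU; apply/orP; right.
case: y yP cyQ clashPQ => u [] yP cyQ clashPQ.
  apply/imfset2P; exists P => //; exists Q; rewrite // inE QF /=.
  apply/eqP/fsetP => z; rewrite in_fsetI in_complset inE.
  by apply/andP/eqP => [[zP czQ]|->]; first exact: clashPQ.
rewrite resolventC; apply/imfset2P; exists Q => //; exists P; rewrite // inE PF /=.
apply/eqP/fsetP => z; rewrite in_fsetI in_complset inE.
apply/andP/eqP => [[zQ czP]|->] //.
by rewrite -[z]complK (clashPQ _ czP) ?complK.
Qed.

Lemma DP_cases (u : nat) (F : {fset clause}) (E : clause) :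
  E \in DP u F -> (E \in F /\ u \notin var E) \/
  forall y, lvar y = u -> exists P Q,
    [/\ P \in F, Q \in F, y \in P, compl y \in Q & E = resolvent u P Q].
Proof.
rewrite /DP in_fsetU !inE => /orP[/andP[]|]; first by left.
case/imfset2P => P PF [Q /=]; rewrite inE => /andP[QF /eqP clashPQ] ->; right.
have : pos u \in P `&` complset Q by rewrite clashPQ inE.
rewrite in_fsetI in_complset => /andP[pP nQ] y /lit_of_var[]->.
  by exists P, Q.
by exists Q, P; rewrite resolventC.
Qed.

Lemma ldeg_DP_unique (F : {fset clause}) (w : nat) (p : lit) (Q0 : clause) :
  MU F -> occ F p = [fset Q0] -> lvar p != w ->
  (forall y, y \in Q0 -> lvar y = w -> ldeg F (compl y) = 1) ->
  ldeg (DP w F) p = 1.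
Proof.
move=> muF occQ0 pw deg_compl; have [Q0F pQ0] := occ1_mem occQ0.
have uniqQ0 := occ1_uniq occQ0.
rewrite /ldeg -/(occ _ p); have [/varP[y yQ0 yw]|wQ0] := boolP (w \in var Q0).
  have /eqP/ldeg1P[E0 occE0] := deg_compl y yQ0 yw.
  have [E0F cyE0] := occ1_mem occE0.
  rewrite (@occ1_intro _ _ (resolvent w Q0 E0)) ?cardfs1 //.
  - rewrite -yw; apply: DP_resolvent => // a.
    exact: MU_singular_clash muF Q0F yQ0 occE0.
  - by rewrite mem_resolvent pw pQ0.
  move=> E /DP_cases[[EF wE] pE | /(_ y yw)[P [Q [PF QF yP cyQ ->]]]].
    by move: wE; rewrite (uniqQ0 E EF pE) -yw var_lit.
  rewrite mem_resolvent pw => /orP[/(uniqQ0 P PF) eP | /(uniqQ0 Q QF) eQ].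
    by rewrite eP (occ1_uniq occE0 QF cyQ).
  by move: (compl_notin muF.1 Q0F yQ0); rewrite -eQ cyQ.
rewrite (@occ1_intro _ _ Q0) ?cardfs1 //; first exact: DP_keep.
move=> E /DP_cases[[EF _] /(uniqQ0 E EF) // | /(_ (pos w) erefl)[P [Q [PF QF wP nwQ ->]]]].
rewrite mem_resolvent pw => /orP[/(uniqQ0 P PF) eP | /(uniqQ0 Q QF) eQ].
  by move: (var_lit wP); rewrite eP (negbTE wQ0).
by move: (var_lit nwQ); rewrite eQ (negbTE wQ0).
Qed.

Lemma ldeg_DP_pos (u : nat) (F : {fset clause}) : ldeg (DP u F) (pos u) = 0.
Proof.
apply/eqP; rewrite cardfs_eq0 -fsubset0; apply/fsubsetP => E.
by rewrite mem_occ => /andP[/DP_var/negP + /var_lit].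
Qed.

Lemma msingular_DP_neq (u w : nat) (F : {fset clause}) : msingular (DP u F) w 1 -> w != u.
Proof. by case/msingular1P=> dp _; apply: contra_eqN dp => /eqP->; rewrite ldeg_DP_pos. Qed.

Section OneSingular.
Variables (F : {fset clause}) (v : nat) (Cp Cn : clause).
Hypotheses (muF : MU F) (occ_pv : occ F (pos v) = [fset Cp]) (occ_nv : occ F (neg v) = [fset Cn]).

Let CpF : Cp \in F := (occ1_mem occ_pv).1.
Let pCp : pos v \in Cp := (occ1_mem occ_pv).2.
Let CnF : Cn \in F := (occ1_mem occ_nv).1.
Let nCn : neg v \in Cn := (occ1_mem occ_nv).2.

Local Notation R := (resolvent v Cp Cn).

Lemma Cp_neq_Cn : Cp != Cn.
Proof. by apply/eqP => eCp; move: (compl_notin muF.1 CpF pCp); rewrite eCp nCn. Qed.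

Lemma var_v_clauses (E : clause) : E \in F -> (v \in var E) = (E == Cp) || (E == Cn).
Proof.
move=> EF; apply/idP/orP => [/varP[x xE /lit_of_var[] xv]|[]/eqP->].
- by left; rewrite (occ1_uniq occ_pv EF) -?xv ?eqxx.
- by right; rewrite (occ1_uniq occ_nv EF) -?xv ?eqxx.
- exact: var_lit pCp.
- exact: var_lit nCn.
Qed.

Lemma resolvent_notin : R \notin F.
Proof.
have [f [satf falsCp falsCn]] := MU_flip muF CpF pCp occ_nv.
apply/negP => RF.
have RCp : R != Cp by apply/eqP => eR; move: pCp; rewrite -eR mem_resolvent eqxx.
have /satf[t] : R \in F `\ Cp by rewrite in_fsetD1 RCp RF.
rewrite mem_resolvent => /andP[tv /orP[tCp|tCn]] ft.
  by move: (falsCp t tCp); rewrite ft eqxx.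
by move: (falsCn t tCn tv); rewrite ft eqxx.
Qed.

Lemma mem_DP_1singular (E : clause) : (E \in DP v F) = (E \in F) && (v \notin var E) || (E == R).
Proof.
apply/idP/idP => [|/orP[/andP[]|/eqP->]]; last 2 first.
- exact: DP_keep.
- apply: (DP_resolvent (y := pos v)) => // a.
  exact: MU_singular_clash muF CpF pCp occ_nv.
case/DP_cases => [[-> ->] // | /(_ (pos v) erefl)[P [Q [PF QF pP nQ ->]]]].
by rewrite (occ1_uniq occ_pv PF pP) (occ1_uniq occ_nv QF nQ) eqxx orbT.
Qed.

Lemma ldeg_DP_1singular (z : lit) : lvar z != v ->
  ldeg (DP v F) z = ldeg F z - ((z \in Cp) && (z \in Cn)).
Proof.
move=> zv.
have occ_off_R : occ (DP v F) z `\` [fset R] = occ F z `\` [fset Cp; Cn].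
  apply/fsetP => E; rewrite !in_fsetD !mem_occ mem_DP_1singular !inE.
  have [->|_] := eqVneq E R; first by rewrite /= (negbTE resolvent_notin) !andbF.
  by case EF: (E \in F); rewrite /= ?andbF // var_v_clauses ?orbF.
have R_DP : R \in DP v F by rewrite mem_DP_1singular eqxx orbT.
rewrite /ldeg -!/(occ _ z) -(cardfsID [fset R]) -[#|` occ F z|](cardfsID [fset Cp; Cn]).
rewrite occ_off_R fsetI1 cardfsI2 ?Cp_neq_Cn // !mem_occ R_DP CpF CnF mem_resolvent zv /=.
by case: (z \in Cp); case: (z \in Cn); rewrite /= ?cardfs1 ?cardfs0; lia.
Qed.

Lemma msingular1_DP_swap (w : nat) : w != v ->
  (forall y, lvar y = w -> (y \in Cp) || (y \in Cn) -> ldeg F (compl y) = 1) ->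
  msingular (DP w F) v 1.
Proof.
move=> wv deg_compl; apply/msingular1P; split.
  apply: (ldeg_DP_unique muF occ_pv); first by rewrite eq_sym.
  by move=> y yCp yw; apply: deg_compl; rewrite ?yCp.
apply: (ldeg_DP_unique muF occ_nv); first by rewrite eq_sym.
by move=> y yCn yw; apply: deg_compl; rewrite ?yCn ?orbT.
Qed.

Lemma shared_w_literal (w : nat) : msingular (DP v F) w 1 -> ~~ msingular F w 1 ->
  exists y, [/\ lvar y = w, occ F y = [fset Cp; Cn] & ldeg F (compl y) = 1].
Proof.
move=> sw not1; have wv := msingular_DP_neq sw; move/msingular1P: sw => [dp dn].
have deg_w y : lvar y = w -> ldeg F y - ((y \in Cp) && (y \in Cn)) = 1.
  by move=> yw; rewrite -ldeg_DP_1singular ?yw //; case/lit_of_var: yw => ->.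
have [y [yw yCp yCn]] : exists y, [/\ lvar y = w, y \in Cp & y \in Cn].
  have [/andP[] |np] := boolP ((pos w \in Cp) && (pos w \in Cn)); first by exists (pos w).
  have [/andP[] |nn] := boolP ((neg w \in Cp) && (neg w \in Cn)); first by exists (neg w).
  case/msingular1P: not1; split.
    by move: (deg_w (pos w) erefl); rewrite (negbTE np) subn0.
  by move: (deg_w (neg w) erefl); rewrite (negbTE nn) subn0.
exists y; split => //.
  apply/eqP; rewrite eq_sym eqEfcard cardfs2 Cp_neq_Cn.
  have := deg_w y yw; rewrite yCp yCn /ldeg -/(occ F y) => degy.
  apply/andP; split; last by lia.
  by apply/fsubsetP => E; rewrite mem_occ !inE => /orP[]/eqP->; rewrite ?CpF ?CnF.
by move: (deg_w (compl y) yw); rewrite (negbTE (compl_notin muF.1 CpF yCp)) subn0.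
Qed.

Lemma swap_not_1singular (w : nat) : msingular (DP v F) w 1 -> ~~ msingular F w 1 ->
  [/\ msingular F w 2,
      forall x, lvar x = w -> ldeg F x = 1 -> side_clauses F x = [fset Cp; Cn],
      msingular (DP w F) v 1
    & singular_tuple F w v 2 1].
Proof.
move=> sw not1; have wv := msingular_DP_neq sw.
have [y [yw occ_y cy1]] := shared_w_literal sw not1.
have y2 : ldeg F y = 2 by rewrite /ldeg -/(occ F y) occ_y cardfs2 Cp_neq_Cn.
have yC (E : clause) : E \in [fset Cp; Cn] -> y \in E.
  by rewrite -occ_y mem_occ => /andP[].
have s2 : msingular F w 2 by rewrite -yw msingular2.
have sv : msingular (DP w F) v 1.
  apply: msingular1_DP_swap => // x /same_var_lit/(_ yw)[-> // | ->].
  by rewrite !(negbTE (compl_notin muF.1 _ (yC _ _))) ?CpF ?CnF ?fset21 ?fset22.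
split=> //; last by rewrite /singular_tuple s2 sv.
move=> x /same_var_lit/(_ yw)[-> | ->]; first by rewrite y2.
by rewrite /side_clauses complK.
Qed.

Lemma not_both_var (w : nat) : w != v -> msingular F w 1 ->
  ~~ ((w \in var Cp) && (w \in var Cn)).
Proof.
move=> wv /msingular1P[wp wn]; apply/negP => /andP[/varP[y yCp yw] /varP[x xCn xw]].
have /eqP/ldeg1P[E occE] : ldeg F y = 1 by case/lit_of_var: yw => ->.
have [xy|xcy] := same_var_lit xw yw.
  by move: Cp_neq_Cn; rewrite (occ1_uniq occE CpF yCp) (occ1_uniq occE CnF) -?xy ?eqxx.
rewrite xcy in xCn; have ypv := MU_singular_clash muF CpF pCp occ_nv yCp xCn.
by move: wv; rewrite -yw ypv eqxx.
Qed.

Lemma swap_1singular (w : nat) : msingular (DP v F) w 1 -> msingular F w 1 ->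
  [/\ msingular (DP w F) v 1,
      singular_tuple F w v 1 1
    & forall E1 E2, w \in var E1 -> w \in var E2 -> #|` [fset Cp; Cn] `&` [fset E1; E2]| <= 1].
Proof.
move=> sw s1; have wv := msingular_DP_neq sw.
have sv : msingular (DP w F) v 1.
  apply: msingular1_DP_swap => // y /lit_of_var[]-> _; by case/msingular1P: s1.
split=> [//||E1 E2 wE1 wE2]; first by rewrite /singular_tuple s1 sv.
apply: cardfsI2_le1; apply: contra (not_both_var wv s1).
by rewrite !inE => /andP[] /orP[]/eqP-> /orP[]/eqP->; rewrite ?wE1 ?wE2.
Qed.

End OneSingular.

Theorem lemma39 (F : {fset clause}) (v w : nat) (C D : clause) :
  MU F ->
  singular_tuple F v w 1 1 ->
  C \in F -> D \in F -> C != D -> v \in var C -> v \in var D ->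
  (~~ msingular F w 1 ->
     [/\ msingular F w 2,
         (forall x : lit, lvar x = w -> ldeg F x = 1 ->
            side_clauses F x = [fset C; D]),
         msingular (DP w F) v 1
       & singular_tuple F w v 2 1]) /\
  (msingular F w 1 ->
     [/\ msingular (DP w F) v 1,
         singular_tuple F w v 1 1
       & forall E1 E2 : clause, E1 \in F -> E2 \in F -> E1 != E2 ->
            w \in var E1 -> w \in var E2 ->
            #|` [fset C; D] `&` [fset E1; E2] | <= 1]).
Proof.
move=> muF /andP[/msingular1P[/eqP/ldeg1P[Cp occ_pv] /eqP/ldeg1P[Cn occ_nv]] sw].
move=> CF DF CD vC vD.
have -> : [fset C; D] = [fset Cp; Cn].
  by apply: fset2_eq; rewrite // !inE -(var_v_clauses occ_pv occ_nv).
split=> [not1 | s1]; first exact: swap_not_1singular.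
have [sv tuple cap] := swap_1singular muF occ_pv occ_nv sw s1.
by split=> // E1 E2 _ _ _; apply: cap.
Qed.
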